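(* For every integer $\ell\geq 1$, every finite digraph $G$ with $\delta^+(G)\geq (1+\sqrt{5})\ell$ contains $S^-_{2,\ell}$ as a subgraph.
   Context: Digraphs are finite, have no loops and no multiple copies of the same edge, but may contain two edges in opposite directions between a pair of vertices. $\delta^+(G)$ is the minimum out-degree of $G$. $S^-_{k,\ell}$ denotes the $(k-1)$-subdivision of the in-star with $\ell$ leaves, i.e. the oriented tree consisting of a centre vertex and $\ell$ directed paths of length $k$ each ending at the centre, pairwise sharing only the centre. Thus $S^-_{2,\ell}$ consists of a centre $c$ and $\ell$ vertex-disjoint (apart from $c$) directed paths $x_i\to a_i\to c$. Containing it as a subgraph means having a subgraph isomorphic to it. *)

From Stdlib Require Import Reals.
From mathcomp Require Import all_boot.
Set Implicit Arguments. Unset Strict Implicit. Unset Printing Implicit Defensive.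

(* A digraph on a finite vertex type V is an edge relation E : rel V.
   No multiple edges is automatic; no loops is the hypothesis [irreflexive E];
   opposite edges u->v and v->u are allowed. *)
Definition outdeg (V : finType) (E : rel V) (v : V) : nat := #|[set w | E v w]|.

(* The (k-1)-subdivision of the in-star with l leaves, S^-_{k,l}:
   vertex None is the centre; Some (i, j) is the j-th vertex (j < k) on the
   i-th directed path; edges (i,j) -> (i,j+1) and (i,k-1) -> centre. *)
Definition instar_vertex (k l : nat) : finType := option ('I_l * 'I_k).

Definition instar_edge (k l : nat) : rel (instar_vertex k l) :=
  fun u v =>
    match u, v with
    | Some (i, j), Some (i', j') => (i == i') && (j.+1 == j')
    | Some (_, j), None => j.+1 == k
    | None, _ => false
    end.

Definition contains_subgraph (W : finType) (EH : rel W) (V : finType) (E : rel V) : Prop :=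
  exists f : W -> V, injective f /\ forall u v, EH u v -> E (f u) (f v).

From Stdlib Require Import Reals Lra.
From mathcomp Require Import all_boot zify.
Set Implicit Arguments. Unset Strict Implicit. Unset Printing Implicit Defensive.

(* Trim every out-neighbourhood to exactly D := min outdeg vertices, so that
   D^2 >= 2lD + 4l^2.  For a centre c take a maximum family M of vertex-disjoint
   legs x -> a -> c; if some #|M| >= l we are done, so assume #|M| < l for all c.
   Maximality (no leg can be added, no leg can be traded for two) shows: the
   in-neighbours of a free in-neighbour of c (one not on a leg) are c or leg
   vertices; if both ends of a leg have free out-neighbours, they have one and
   the same; and the two vertices of a leg whose first vertex also points to c
   cannot both have in-degree >= 2l.  Hence c has at most l - 1 in-neighbours
   of in-degree >= 2l, and the in-degrees of its other in-neighbours sum to at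
   most lD + 4l(l - 1).  Double counting the edges between vertices of in-degree
   >= 2l and the others then yields D^2 < 2lD + 4l^2. *)

Section NatSums.
Variable T : finType.

Lemma card_setI_sum (Y : {pred T}) (P : pred T) :
  #|[set y in Y | P y]| = \sum_(y in Y) P y.
Proof.
rewrite -sum1_card (eq_bigl (fun y => (y \in Y) && P y)); last by move=> y; rewrite inE.
by rewrite big_mkcondr; apply: eq_bigr => y _; case: (P y).
Qed.

Lemma double_counting (R : rel T) (X Y : {pred T}) :
  \sum_(x in X) #|[set y in Y | R x y]| = \sum_(y in Y) #|[set x in X | R x y]|.
Proof.
under eq_bigr do rewrite card_setI_sum.
by rewrite exchange_big; apply: eq_bigr => y _; rewrite card_setI_sum.
Qed.

Lemma sum_setU_le (X Y : {set T}) (h : T -> nat) :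
  \sum_(x in X :|: Y) h x <= \sum_(x in X) h x + \sum_(x in Y) h x.
Proof.
rewrite (big_setID X) setUK setDUl setDv set0U leq_add2l.
by rewrite [leqRHS](big_setID X) leq_addl.
Qed.

End NatSums.

Section Digraph.
Variables (V : finType) (E : rel V).
Hypothesis irrE : irreflexive E.
Implicit Types (c x : V) (p q r : V * V) (M : {set V * V}).

Definition indeg (v : V) := #|[set u | E u v]|.

(* The leg [(x, a)] at the centre [c] is the path x -> a -> c; irreflexivity
   gives x != a and a != c. *)
Definition leg (c : V) (p : V * V) := [&& E p.1 p.2, E p.2 c & p.1 != c].

Definition avoids (x : V) (r : V * V) := (x != r.1) && (x != r.2).

Definition vdisj (p q : V * V) := avoids p.1 q && avoids p.2 q.

Definition legs (c : V) (M : {set V * V}) :=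
  [forall p in M, leg c p] && [forall p in M, forall q in M, (p != q) ==> vdisj p q].

Lemma legsP c M :
  reflect ({in M, forall p, leg c p} /\ {in M &, forall p q, p != q -> vdisj p q})
          (legs c M).
Proof.
apply: (iffP andP) => [[/forall_inP legM /forall_inP disjM] | [legM disjM]].
  split=> // p q pM qM; move/forall_inP: (disjM p pM) => /(_ q qM); exact/implyP.
split; apply/forall_inP => // p pM.
by apply/forall_inP => q qM; apply/implyP; apply: disjM.
Qed.

Lemma legs0 c : legs c set0.
Proof. by apply/legsP; split=> p; rewrite inE. Qed.

Lemma leg_neq1c c p : leg c p -> p.1 != c.
Proof. by case/and3P. Qed.

Lemma leg_neq2c c p : leg c p -> p.2 != c.
Proof. by case/and3P => _ p2c _; apply: contraTneq p2c => ->; rewrite irrE. Qed.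

Lemma leg_neq12 c p : leg c p -> p.1 != p.2.
Proof. by case/and3P => p12 _ _; apply: contraTneq p12 => ->; rewrite irrE. Qed.

Lemma vdisjC p q : vdisj p q = vdisj q p.
Proof.
rewrite /vdisj /avoids !(eq_sym p.1) !(eq_sym p.2).
by case: (q.1 != p.1); case: (q.1 != p.2); case: (q.2 != p.1); case: (q.2 != p.2).
Qed.

Lemma vdisj_neq p q : vdisj p q -> p != q.
Proof. by apply: contraTneq => ->; rewrite /vdisj /avoids eqxx. Qed.

Definition leg_vertex (p : V * V) (j : 'I_2) := if val j == 0 then p.1 else p.2.

Lemma leg_vertex_inj c M p q j j' : legs c M -> p \in M -> q \in M ->
  leg_vertex p j = leg_vertex q j' -> p = q /\ j = j'.
Proof.
case/legsP=> legM disjM pM qM.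
have [<-|pq] := eqVneq p q => e.
  split=> //; apply: val_inj; move: e (leg_neq12 (legM p pM)); rewrite /leg_vertex.
  by case: j => [[|[|]]] //= _; case: j' => [[|[|]]] //= _ ->; rewrite eqxx.
case/andP: (disjM p q pM qM pq) e; rewrite /avoids /leg_vertex.
case/andP=> /negPf p1q1 /negPf p1q2 /andP [/negPf p2q1 /negPf p2q2].
by case: ifP => _; case: ifP => _ e; rewrite e eqxx in p1q1 p1q2 p2q1 p2q2.
Qed.

Lemma leg_vertex_neq_centre c p j : leg c p -> leg_vertex p j != c.
Proof.
by move=> legp; rewrite /leg_vertex; case: ifP => _; [exact: leg_neq1c | exact: leg_neq2c].
Qed.

Lemma instar_of_legs l c M : legs c M -> l <= #|M| ->
  contains_subgraph (@instar_edge 2 l) E.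
Proof.
move=> legsM lM; have [legM _] := legsP _ _ legsM.
pose pr (i : 'I_l) : V * V := enum_val (widen_ord lM i).
have prM i : pr i \in M by exact: enum_valP.
pose f (v : instar_vertex 2 l) :=
  if v is Some (i, j) then leg_vertex (pr i) j else c.
exists f; split.
  move=> [[i j]|] [[i' j']|] //= e.
  - have [/enum_val_inj /(congr1 val) ii' ->] := leg_vertex_inj legsM (prM i) (prM i') e.
    by congr (Some (_, _)); apply: val_inj.
  - by move: (leg_vertex_neq_centre j (legM _ (prM i))); rewrite e eqxx.
  - by move: (leg_vertex_neq_centre j' (legM _ (prM i'))); rewrite e eqxx.
move=> [[i j]|] [[i' j']|] //=; rewrite /leg_vertex.
- case/andP=> /eqP <- /eqP; case: j => [[|[|]]] //= _; case: j' => [[|[|]]] //= _ _.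
  by case/and3P: (legM _ (prM i)).
- case: j => [[|[|]]] //= _ _.
  by case/and3P: (legM _ (prM i)).
Qed.

Lemma legs_subset c M M' : M' \subset M -> legs c M -> legs c M'.
Proof.
move=> /subsetP sM' /legsP [legM disjM]; apply/legsP; split=> [p /sM'|p q /sM' pM /sM' qM].
  exact: legM.
exact: disjM.
Qed.

Lemma legsU1 c M q : legs c M -> leg c q -> {in M, forall r, vdisj q r} ->
  legs c (q |: M).
Proof.
move=> /legsP [legM disjM] legq qM; apply/legsP; split=> [p /setU1P [->|/legM]|] //.
move=> p r /setU1P [->|pM] /setU1P [->|rM]; rewrite ?eqxx // => pr.
- exact: qM.
- by rewrite vdisjC qM.
- exact: disjM.
Qed.

Lemma cardsU1_vdisj M q : {in M, forall r, vdisj q r} -> #|q |: M| = #|M|.+1.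
Proof.
move=> qM; rewrite cardsU1; case: (boolP (q \in M)) => // /qM.
by move/vdisj_neq; rewrite eqxx.
Qed.

Definition legV (M : {set V * V}) : {set V} := [set p.1 | p in M] :|: [set p.2 | p in M].

Lemma card_legV M : #|legV M| <= 2 * #|M|.
Proof.
rewrite mul2n -addnn (leq_trans (leq_of_leqif (leq_card_setU _ _))) //.
by rewrite leq_add // leq_imset_card.
Qed.

Lemma mem_legV1 M p : p \in M -> p.1 \in legV M.
Proof. by move=> pM; rewrite inE imset_f. Qed.

Lemma mem_legV2 M p : p \in M -> p.2 \in legV M.
Proof. by move=> pM; rewrite inE imset_f ?orbT. Qed.

Lemma legVP M x : reflect (exists2 p, p \in M & x = p.1 \/ x = p.2) (x \in legV M).
Proof.
apply: (iffP setUP) => [[] /imsetP [p pM ->]|[p pM [] ->]].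
- by exists p => //; left.
- by exists p => //; right.
- by left; apply: imset_f.
- by right; apply: imset_f.
Qed.

Lemma avoids_notin_legV M x r : x \notin legV M -> r \in M -> avoids x r.
Proof.
move=> xM rM; apply/andP; split; apply: contraNneq xM => ->.
  exact: mem_legV1.
exact: mem_legV2.
Qed.

Lemma centre_notin_legV c M : legs c M -> c \notin legV M.
Proof.
case/legsP=> legM _; apply/negP => /legVP [p /legM legp [] e].
  by move: (leg_neq1c legp); rewrite -e eqxx.
by move: (leg_neq2c legp); rewrite -e eqxx.
Qed.

Lemma sum_indeg : \sum_v indeg v = \sum_v outdeg E v.
Proof. exact/esym/(double_counting E predT predT). Qed.

Lemma exists_max_legs c : exists2 M, legs c M & forall M', legs c M' -> #|M'| <= #|M|.
Proof. by case: (arg_maxnP (fun M => #|M|) (legs0 c)) => M; exists M. Qed.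

Definition in_weight t c := \sum_(a | E a c && (indeg a < t)) indeg a.

Section MaximumLegs.
Variables (c : V) (M : {set V * V}).
Hypotheses (legsM : legs c M) (maxM : forall M', legs c M' -> #|M'| <= #|M|).

Let legM : {in M, forall p, leg c p} := (legsP _ _ legsM).1.
Let disjM : {in M &, forall p q, p != q -> vdisj p q} := (legsP _ _ legsM).2.

Lemma no_augmenting_leg q : leg c q -> {in M, forall r, vdisj q r} -> False.
Proof.
move=> legq qM; have := maxM (legsU1 legsM legq qM).
by rewrite cardsU1_vdisj // ltnn.
Qed.

Lemma no_leg_exchange p q1 q2 : p \in M -> leg c q1 -> leg c q2 -> vdisj q1 q2 ->
  {in M :\ p, forall r, vdisj q1 r && vdisj q2 r} -> False.
Proof.
move=> pM legq1 legq2 q12 qMp.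
have legsMp : legs c (M :\ p) by apply: legs_subset legsM; exact: subD1set.
have q2Mp : {in M :\ p, forall r, vdisj q2 r} by move=> r /qMp /andP [].
have q1Mp : {in q2 |: (M :\ p), forall r, vdisj q1 r}.
  by move=> r /setU1P [->|/qMp /andP []].
have := maxM (legsU1 (legsU1 legsMp legq2 q2Mp) legq1 q1Mp).
by rewrite !cardsU1_vdisj // (cardsD1 p M) pM ltnn.
Qed.

Definition free_in_nbrs := [set a | E a c & a \notin legV M].

Lemma in_free_in_nbrs a : (a \in free_in_nbrs) = E a c && (a \notin legV M).
Proof. by rewrite in_set. Qed.

Lemma free_in_nbrs_preds a x : a \in free_in_nbrs -> E x a -> x != c -> x \in legV M.
Proof.
rewrite in_free_in_nbrs => /andP [ac aM] xa xc; apply: contraT => xM; exfalso.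
apply: (@no_augmenting_leg (x, a)); first by rewrite /leg /= xa ac xc.
by move=> r rM; rewrite /vdisj /= (avoids_notin_legV xM rM) (avoids_notin_legV aM rM).
Qed.

Lemma indeg_free a : a \in free_in_nbrs -> indeg a <= #|legV M|.+1.
Proof.
move=> aF; apply: (@leq_trans #|c |: legV M|); last by rewrite cardsU1 centre_notin_legV.
apply/subset_leq_card/subsetP => x; rewrite in_setU1 inE => xa.
by have [//|xc] := eqVneq x c; rewrite (free_in_nbrs_preds aF xa xc).
Qed.

Lemma free_out_nbrs_leg p w w' : p \in M -> w \in free_in_nbrs -> w' \in free_in_nbrs ->
  E p.1 w -> E p.2 w' -> w = w'.
Proof.
move=> pM; rewrite !in_free_in_nbrs => /andP [wc wM] /andP [w'c w'M] p1w p2w'.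
apply/eqP; apply: contraT => ww'; exfalso.
have legp := legM pM.
apply: (@no_leg_exchange p (p.1, w) (p.2, w')) => //.
- by rewrite /leg /= p1w wc leg_neq1c.
- by rewrite /leg /= p2w' w'c leg_neq2c.
- have /andP [wp1 wp2] := avoids_notin_legV wM pM.
  have /andP [w'p1 w'p2] := avoids_notin_legV w'M pM.
  by rewrite /vdisj /avoids /= (leg_neq12 legp) ww' eq_sym w'p1 wp2.
move=> r /setD1P [rp rM].
have /andP [p1r p2r] : vdisj p r by apply: disjM; rewrite // eq_sym.
by rewrite /vdisj /= p1r p2r (avoids_notin_legV wM rM) (avoids_notin_legV w'M rM).
Qed.

Section FewLegs.
Variable l : nat.
Hypothesis fewM : #|M| < l.

Definition outer_preds z := [set y | E y z & (y \notin legV M) && (y != c)].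

Lemma two_outer_preds z : z \in legV M -> 2 * l <= indeg z -> 1 < #|outer_preds z|.
Proof.
move=> zM bigz.
have /subset_leq_card : [set u | E u z] \subset c |: (outer_preds z :|: (legV M :\ z)).
  apply/subsetP => u; rewrite in_set => uz.
  have uz' : u != z by apply: contraTneq uz => ->; rewrite irrE.
  rewrite in_setU1 in_setU in_setD1 in_set uz uz' /=.
  by case: (u \in legV M); case: (u == c).
have := leq_of_leqif (leq_card_setU (outer_preds z) (legV M :\ z)).
have := cardsD1 z (legV M); rewrite zM cardsU1.
have := card_legV M; rewrite /indeg in bigz; lia.
Qed.

Lemma leg_not_both_high p : p \in M -> E p.1 c ->
  2 * l <= indeg p.1 -> 2 * l <= indeg p.2 -> False.
Proof.
move=> pM p1c big1 big2; have legp := legM pM.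
have [y' y'F] : exists y', y' \in outer_preds p.2.
  by apply/set0Pn; rewrite -card_gt0 (ltn_trans _ (two_outer_preds (mem_legV2 pM) big2)).
have [y yF] : exists y, y \in outer_preds p.1 :\ y'.
  apply/set0Pn; rewrite -card_gt0; have := cardsD1 y' (outer_preds p.1).
  have := two_outer_preds (mem_legV1 pM) big1; case: (y' \in _) => /=; lia.
move: yF; rewrite in_setD1 in_set => /andP [yy' /and3P [yp1 yM yc]].
move: y'F; rewrite in_set => /and3P [y'p2 y'M y'c].
apply: (@no_leg_exchange p (y, p.1) (y', p.2)) => //.
- by rewrite /leg /= yp1 p1c.
- by rewrite /leg /= y'p2 y'c andbT; case/and3P: legp.
- have /andP [_ yp2] := avoids_notin_legV yM pM.
  have /andP [y'p1 _] := avoids_notin_legV y'M pM.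
  by rewrite /vdisj /avoids /= yy' yp2 eq_sym y'p1 (leg_neq12 legp).
move=> r /setD1P [rp rM].
have /andP [p1r p2r] : vdisj p r by apply: disjM; rewrite // eq_sym.
by rewrite /vdisj /= p1r p2r (avoids_notin_legV yM rM) (avoids_notin_legV y'M rM).
Qed.

Lemma card_high_in_nbrs : #|[set a | E a c & 2 * l <= indeg a]| <= #|M|.
Proof.
set B := [set a | _ & _].
have BM a : a \in B -> a \in legV M.
  rewrite in_set => /andP [ac biga]; apply: contraT => aM.
  have := indeg_free (a := a); rewrite in_free_in_nbrs ac aM => /(_ isT).
  have := card_legV M; lia.
pose g a := odflt (c, c) [pick p in M | (p.1 == a) || (p.2 == a)].
have gP a : a \in B -> g a \in M /\ ((g a).1 = a \/ (g a).2 = a).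
  move=> /BM /legVP [p pM pa]; rewrite /g; case: pickP => [q /andP [qM /orP [] /eqP]|] /=.
  - by split=> //; left.
  - by split=> //; right.
  by move/(_ p); rewrite pM; case: pa => ->; rewrite eqxx ?orbT.
rewrite -(@card_in_imset _ _ g).
  by apply/subset_leq_card/subsetP => q /imsetP [a /gP [gM _] ->].
move=> a a' aB a'B gaa'; apply/eqP; apply: contraT => aa'; exfalso.
have [gM ga] := gP _ aB; have [_ ga'] := gP _ a'B; rewrite -gaa' in ga'.
move: aB a'B; rewrite !in_set => /andP [ac biga] /andP [a'c biga'].
case: ga => ga; case: ga' => ga'; first [by rewrite -ga -ga' eqxx in aa' |
  by apply: (leg_not_both_high gM); rewrite ?ga ?ga'].
Qed.

End FewLegs.

Section BoundedOutdeg.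
Variable D : nat.
Hypothesis outD : forall v, outdeg E v <= D.

Lemma out_free_le x : #|[set a in free_in_nbrs | E x a]| <= D.
Proof.
apply: leq_trans (outD x); apply/subset_leq_card/subsetP => a.
by case/setIdP => _; rewrite in_set.
Qed.

Lemma leg_out_free_le p : 1 < D -> p \in M ->
  #|[set a in free_in_nbrs | E p.1 a]| + #|[set a in free_in_nbrs | E p.2 a]| <= D.
Proof.
move=> D2 pM; set H1 := [set a in _ | E p.1 a]; set H2 := [set a in _ | E p.2 a].
have [->|/set0Pn [w]] := eqVneq H1 set0; first by rewrite cards0 out_free_le.
have [->|/set0Pn [w']] := eqVneq H2 set0; first by rewrite cards0 addn0 out_free_le.
move=> /setIdP [w'F p2w'] /setIdP [wF p1w].
have /subset_leq_card : H1 \subset [set w'].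
  apply/subsetP => u /setIdP [uF p1u]; rewrite in_set1.
  by rewrite (free_out_nbrs_leg pM uF w'F p1u p2w').
have /subset_leq_card : H2 \subset [set w].
  apply/subsetP => u /setIdP [uF p2u]; rewrite in_set1.
  by rewrite (free_out_nbrs_leg pM wF uF p1w p2u).
rewrite !cards1; lia.
Qed.

Lemma sum_indeg_free : 1 < D -> \sum_(a in free_in_nbrs) indeg a <= #|M|.+1 * D.
Proof.
move=> D2.
have indegE a : a \in free_in_nbrs -> indeg a = #|[set x in c |: legV M | E x a]|.
  move=> aF; apply: eq_card => x; rewrite in_set; apply/idP/setIdP => [xa|[] //].
  split=> //; rewrite in_setU1; have [//|xc] := eqVneq x c.
  exact: free_in_nbrs_preds aF xa xc.
rewrite (eq_bigr _ indegE) -double_counting big_setU1 ?centre_notin_legV //=.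
rewrite mulSn leq_add ?out_free_le //; apply: leq_trans (sum_setU_le _ _ _) _.
have inj1 : {in M &, injective (fun p : V * V => p.1)}.
  move=> p q pM qM e; apply/eqP; apply: contraT => /(disjM pM qM) /andP [/andP [+ _] _].
  by rewrite e eqxx.
have inj2 : {in M &, injective (fun p : V * V => p.2)}.
  move=> p q pM qM e; apply/eqP; apply: contraT => /(disjM pM qM) /andP [_ /andP [_ +]].
  by rewrite e eqxx.
have legs_sum : \sum_(p in M) (#|[set a in free_in_nbrs | E p.1 a]| +
                               #|[set a in free_in_nbrs | E p.2 a]|) <= #|M| * D.
  rewrite -sum_nat_const; apply: (@leq_sum _ _ (mem M)) => p.
  exact: leg_out_free_le.
by rewrite (big_imset _ inj1) (big_imset _ inj2) -big_split.
Qed.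

Lemma in_weight_le t : 1 < D -> in_weight t c <= #|M|.+1 * D + #|legV M| * t.
Proof.
move=> D2; rewrite /in_weight (bigID (fun a => a \in legV M)) /= addnC leq_add //.
  apply: leq_trans (sum_indeg_free D2).
  rewrite [leqRHS](bigID (fun a => indeg a < t)) /=; apply: leq_trans (leq_addr _ _).
  by apply/eq_leq/eq_bigl => a; rewrite in_free_in_nbrs -!andbA; do 2!bool_congr.
rewrite -sum_nat_const big_mkcond [leqRHS]big_mkcond; apply: leq_sum => a _.
by case: (a \in legV M); case: (E a c); case: ltnP => //= /ltnW.
Qed.

End BoundedOutdeg.
End MaximumLegs.

Section Counting.
Variables (D l : nat).
Hypothesis outD : forall v, outdeg E v = D.

Definition high := [set a | 2 * l <= indeg a].
Definition low := [set a | indeg a < 2 * l].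

Let out_high a := #|[set y in high | E a y]|.
Let out_low a := #|[set y in low | E a y]|.

Lemma card_high_low (P : pred V) :
  #|[set y in high | P y]| + #|[set y in low | P y]| = #|[set y | P y]|.
Proof.
rewrite -(cardsID high [set y | P y]).
by congr (_ + _); apply: eq_card => y; rewrite !inE -?ltnNge andbC.
Qed.

Lemma high_nonempty : 0 < #|V| -> 2 * l < D -> 0 < #|high|.
Proof.
move=> V0 lD; rewrite card_gt0; apply: contraTneq V0 => high0.
have low_all v : indeg v <= 2 * l.
  have : v \notin high by rewrite high0 inE.
  by rewrite inE -ltnNge => /ltnW.
have := @leq_sum _ (index_enum V) xpredT _ _ (fun v _ => low_all v).
rewrite sum_indeg (eq_bigr _ (fun v _ => outD v)) !sum_nat_const.
change (#|V| * D <= #|V| * (2 * l) -> ~~ (0 < #|V|)); nia.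
Qed.

Lemma sum_indeg_low :
  \sum_(a in low) indeg a = \sum_(b in high) out_low b + \sum_(a in low) out_low a.
Proof.
rewrite /out_low (double_counting E high) (double_counting E low) -big_split /=.
by apply: eq_bigr => a _; rewrite card_high_low.
Qed.

Lemma sum_in_weight_high :
  \sum_(c in high) in_weight (2 * l) c = \sum_(a in low) indeg a * out_high a.
Proof.
have in_weightE c : in_weight (2 * l) c = \sum_(a in low) E a c * indeg a.
  rewrite /in_weight big_mkcond [RHS]big_mkcond; apply: eq_bigr => a _.
  by rewrite inE; case: (E a c); case: (_ < _); rewrite ?mul1n.
rewrite (eq_bigr _ (fun c _ => in_weightE c)) exchange_big; apply: eq_bigr => a _.
by rewrite /out_high card_setI_sum big_distrr; apply: eq_bigr => c _; rewrite mulnC.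
Qed.

Lemma sum_out_high : \sum_(b in high) out_low b + \sum_(c in high) #|[set x in high | E x c]| =
  #|high| * D.
Proof.
rewrite -(double_counting E high high) addnC -big_split -sum_nat_const /=.
by apply: eq_bigr => b _; rewrite card_high_low -(outD b).
Qed.

Lemma sum_out_low_le_in_weight : 2 * l <= D ->
  D * \sum_(b in high) out_low b <= \sum_(c in high) in_weight (2 * l) c.
Proof.
move=> lD; rewrite sum_in_weight_high -(leq_add2r (D * \sum_(a in low) out_low a)).
rewrite -mulnDr -sum_indeg_low !big_distrr -big_split /=; apply: leq_sum => a.
rewrite inE => /ltnW /leq_trans /(_ lD) aD.
have := card_high_low (E a); rewrite -/(out_high a) -/(out_low a) -/(outdeg E a) outD => e.
by rewrite -{1}e mulnDl [out_high a * _]mulnC leq_add2l mulnC leq_mul2r aD orbT.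
Qed.

Lemma counting_contradiction : 0 < #|V| -> 0 < l -> 2 * l * D + 4 * (l * l) <= D * D ->
  (forall c, #|[set a | E a c & 2 * l <= indeg a]| <= l - 1) ->
  (forall c, in_weight (2 * l) c <= l * D + 4 * l * (l - 1)) -> False.
Proof.
move=> V0 l0 lD few_high light_low; have l2D : 2 * l < D by nia.
have high0 := high_nonempty V0 l2D.
have := sum_out_low_le_in_weight (ltnW l2D).
have : \sum_(c in high) in_weight (2 * l) c <= #|high| * (l * D + 4 * l * (l - 1)).
  by rewrite -sum_nat_const; apply: leq_sum => c _; apply: light_low.
have : \sum_(c in high) #|[set x in high | E x c]| <= #|high| * (l - 1).
  rewrite -sum_nat_const; apply: leq_sum => c _; apply: leq_trans (few_high c).
  by apply/subset_leq_card/subsetP => x; rewrite !inE andbC.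
have := sum_out_high.
move: (\sum_(b in high) _) (\sum_(c in high) #|_|) (\sum_(c in high) in_weight _ _) => b d w.
move=> bd dx wx Db.
have : #|high| * (D * D) <= #|high| * (D * (l - 1) + (l * D + 4 * l * (l - 1))).
  have : D * (b + d) <= w + D * (#|high| * (l - 1)).
    by rewrite mulnDr leq_add // leq_mul2l dx orbT.
  rewrite bd; nia.
rewrite leq_pmul2l //; nia.
Qed.

End Counting.

Theorem instar_of_out_regular l D : (forall v, outdeg E v = D) -> 0 < l -> 0 < #|V| ->
  2 * l * D + 4 * (l * l) <= D * D -> contains_subgraph (@instar_edge 2 l) E.
Proof.
move=> outD l0 V0 lD.
have [[c M] /= /andP [legsM lM] | few_legs] :=
  pickP (fun cM : V * {set V * V} => legs cM.1 cM.2 && (l <= #|cM.2|)).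
  exact: instar_of_legs legsM lM.
have D2 : 1 < D by nia.
have outD_le v : outdeg E v <= D by rewrite outD.
have bounds c : #|[set a | E a c & 2 * l <= indeg a]| <= l - 1 /\
                in_weight (2 * l) c <= l * D + 4 * l * (l - 1).
  have [M legsM maxM] := exists_max_legs c.
  have fewM : #|M| < l by rewrite ltnNge; have := few_legs (c, M); rewrite /= legsM /= => ->.
  split; first by have := card_high_in_nbrs legsM maxM fewM; lia.
  by have := in_weight_le legsM maxM outD_le (2 * l) D2; have := card_legV M; nia.
by case: (counting_contradiction outD V0 l0 lD (fun c => (bounds c).1)
                                                (fun c => (bounds c).2)).
Qed.

End Digraph.

Lemma out_regular_subrel (V : finType) (E : rel V) D : (forall v, D <= outdeg E v) ->
  exists2 E' : rel V, subrel E' E & forall v, outdeg E' v = D.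
Proof.
move=> Dle; exists (fun u w => w \in take D (enum [set x | E u x])).
  by move=> u w /mem_take; rewrite mem_enum inE.
move=> v; have us : uniq (take D (enum [set x | E v x])) by rewrite take_uniq ?enum_uniq.
rewrite /outdeg -[RHS](size_takel (s := enum [set x | E v x])); last by rewrite -cardE Dle.
by rewrite -(card_uniqP us); apply: eq_card => w; rewrite inE.
Qed.

Lemma contains_subgraph_subrel (W V : finType) (EH : rel W) (E E' : rel V) :
  subrel E' E -> contains_subgraph EH E' -> contains_subgraph EH E.
Proof. by move=> E'E [f [finj fE]]; exists f; split=> // u v /fE /E'E. Qed.

Section GoldenRatio.
Local Open Scope R_scope.

Lemma nat_bound_of_golden_ratio (l D : nat) :
  (1 + sqrt 5) * INR l <= INR D -> (2 * l * D + 4 * (l * l) <= D * D)%N.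
Proof.
move=> lD.
have sqrt5_sq : sqrt 5 * sqrt 5 = 5 by apply: sqrt_sqrt; lra.
have sqrt5_l : 0 <= sqrt 5 * INR l <= INR D - INR l.
  by split; [apply: Rmult_le_pos; [apply: sqrt_pos | apply: pos_INR] | lra].
have : 5 * (INR l * INR l) <= (INR D - INR l) * (INR D - INR l) by rewrite -sqrt5_sq; nra.
move=> sq; apply/leP/INR_le; rewrite -!multE -!plusE !plus_INR !mult_INR /=; nra.
Qed.

End GoldenRatio.

Theorem theorem1p8 (l : nat) (V : finType) (E : rel V) :
  (1 <= l)%N ->
  (0 < #|V|)%N ->
  irreflexive E ->
  (forall v : V, Rle (Rmult (Rplus 1 (sqrt 5)) (INR l)) (INR (outdeg E v))) ->
  contains_subgraph (@instar_edge 2 l) E.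
Proof.
move=> l0 V0 irrE degE; have [v0 _] := card_gt0P V0.
pose vmin := [arg min_(v < v0) outdeg E v].
have minE v : outdeg E vmin <= outdeg E v by rewrite /vmin; case: arg_minnP => // u _; apply.
have [E' E'E outE'] := out_regular_subrel minE.
have irrE' : irreflexive E' by move=> u; apply/negP => /E'E; rewrite irrE.
apply: contains_subgraph_subrel E'E _.
apply: (instar_of_out_regular irrE' outE' l0 V0).
exact: nat_bound_of_golden_ratio (degE vmin).
Qed.
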